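(* Let $n>2$ be an integer and fix $a\in\mathbb{R}$ and $b\in\mathbb{R}$ with $b\ne0$. For $c\in\mathbb{R}$ define \[\lambda_\pm(c)=\tfrac12\Bigl(2a-(n-1)c\pm\sqrt{\bigl(2a+(n+1)c\bigr)^2+4nb^2}\Bigr)\] (these are the two eigenvalues $\lambda_\pm$ of the matrix $m_n(a,b,c)$ described in the context) and $\lambda_{\mathrm{sep}}(c)=c+2a$. Then: (a) $c\mapsto\lambda_+(c)$ is strictly convex and $c\mapsto\lambda_-(c)$ is strictly concave on $\mathbb{R}$; (b) $\lambda_-(c)<\lambda_{\mathrm{sep}}(c)<\lambda_+(c)$ for every $c\in\mathbb{R}$ (so the three graphs have no common points), and the line $\lambda=c+2a$ is an asymptote of $\lambda=\lambda_+(c)$ as $c\to+\infty$ and of $\lambda=\lambda_-(c)$ as $c\to-\infty$; (c) the line $\lambda=-nc$ (independent of $a$) is the other asymptote of the curves $\lambda=\lambda_\pm(c)$ (namely of $\lambda_+$ as $c\to-\infty$ and of $\lambda_-$ as $c\to+\infty$).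
   Context: For $n>2$ and real $a,b,c$, $m_n(a,b,c)$ is the $(n+1)\times(n+1)$ symmetric matrix with rows/columns indexed $0,\dots,n$, $(0,0)$-entry $-nc$, $(0,j)$- and $(j,0)$-entries $b$ ($j=1,\dots,n$), and lower-right block the circulant $\mathrm{circ}(c,a,0,\dots,0,a)$ (diagonal $c$, entries $a$ at positions $(j,j\pm1 \bmod n)$, zeros elsewhere). *)

From Stdlib Require Import Reals.
From Coquelicot Require Import Coquelicot.
Open Scope R_scope.

Definition lam_plus (n : nat) (a b c : R) : R :=
  / 2 * (2 * a - (INR n - 1) * c + sqrt ((2 * a + (INR n + 1) * c) ^ 2 + 4 * INR n * b ^ 2)).

Definition lam_minus (n : nat) (a b c : R) : R :=
  / 2 * (2 * a - (INR n - 1) * c - sqrt ((2 * a + (INR n + 1) * c) ^ 2 + 4 * INR n * b ^ 2)).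

Definition lam_sep (a c : R) : R := c + 2 * a.

Definition strictly_convex (f : R -> R) : Prop :=
  forall x y t, x <> y -> 0 < t < 1 ->
    f (t * x + (1 - t) * y) < t * f x + (1 - t) * f y.

Definition strictly_concave (f : R -> R) : Prop :=
  forall x y t, x <> y -> 0 < t < 1 ->
    t * f x + (1 - t) * f y < f (t * x + (1 - t) * y).

Definition asymptote_at (f l : R -> R) (x : Rbar) : Prop :=
  is_lim (fun c => f c - l c) x 0.

(** With [u = 2a + (n+1)c], [D = 4nb^2 > 0] and [S = sqrt (u^2 + D)], one has
    [lam_plus = lam_sep + (S - u)/2 = -nc + (u + S)/2] and
    [lam_minus = lam_sep - (S + u)/2 = -nc + (u - S)/2]. Since [u] is an
    increasing affine function of [c], everything follows from three properties
    of [u |-> S]: it is strictly convex (strict Cauchy-Schwarz), [S > |u|], and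
    [S - |u| = D / (S + |u|) -> 0] as [|u| -> oo]. *)

From Stdlib Require Import Reals Lra Lia.
From Coquelicot Require Import Coquelicot.
Open Scope R_scope.

Lemma strictly_convex_comp_affine (f : R -> R) (a0 k : R) :
  k <> 0 -> strictly_convex f -> strictly_convex (fun c => f (a0 + k * c)).
Proof.
  intros hk hf x y t hxy ht.
  replace (a0 + k * (t * x + (1 - t) * y))
    with (t * (a0 + k * x) + (1 - t) * (a0 + k * y)) by ring.
  apply hf; [| exact ht].
  intros E. apply hxy, (Rmult_eq_reg_l k); [lra | exact hk].
Qed.

Lemma is_lim_affine (a0 k : R) (x : Rbar) :
  0 < k -> x = p_infty \/ x = m_infty -> is_lim (fun c => a0 + k * c) x x.
Proof.
  intros hk hx.
  assert (hkx : is_Rbar_mult k x x).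
  { apply is_Rbar_mult_sym.
    destruct hx as [-> | ->];
      [apply is_Rbar_mult_p_infty_pos | apply is_Rbar_mult_m_infty_pos]; exact hk. }
  eapply is_lim_plus; [apply is_lim_const | apply is_lim_scal_l, is_lim_id |].
  rewrite (is_Rbar_mult_unique _ _ _ hkx).
  destruct hx as [-> | ->]; easy.
Qed.

Lemma is_lim_comp_affine (g : R -> R) (a0 k : R) (x l : Rbar) :
  0 < k -> x = p_infty \/ x = m_infty ->
  is_lim g x l -> is_lim (fun c => g (a0 + k * c)) x l.
Proof.
  intros hk hx hg.
  apply (is_lim_comp g _ x l x hg (is_lim_affine a0 k x hk hx)).
  destruct hx as [-> | ->]; exists 0; easy.
Qed.

Lemma is_lim_scal_0 (f : R -> R) (s : R) (x : Rbar) :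
  is_lim f x 0 -> is_lim (fun y => s * f y) x 0.
Proof.
  intros hf. replace (Finite 0) with (Rbar_mult s 0) by (simpl; f_equal; ring).
  exact (is_lim_scal_l f s x 0 hf).
Qed.

Section SqrtSqAdd.

Variable D : R.
Hypothesis hD : 0 < D.

Lemma sqrt_sq_add_sq (u : R) : sqrt (u ^ 2 + D) ^ 2 = u ^ 2 + D.
Proof. apply pow2_sqrt. pose proof (pow2_ge_0 u). lra. Qed.

Lemma Rabs_lt_sqrt_sq_add (u : R) : Rabs u < sqrt (u ^ 2 + D).
Proof.
  pose proof (sqrt_sq_add_sq u). pose proof (pow2_abs u).
  pose proof (sqrt_pos (u ^ 2 + D)). pose proof (Rabs_pos u).
  nra.
Qed.

Lemma sqrt_sq_add_pos (u : R) : 0 < sqrt (u ^ 2 + D).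
Proof. pose proof (Rabs_lt_sqrt_sq_add u). pose proof (Rabs_pos u). lra. Qed.

Lemma sqrt_sq_add_sub_gt0 (u : R) : 0 < sqrt (u ^ 2 + D) - u.
Proof. pose proof (Rabs_lt_sqrt_sq_add u). pose proof (Rle_abs u). lra. Qed.

Lemma sqrt_sq_add_add_gt0 (u : R) : 0 < sqrt (u ^ 2 + D) + u.
Proof.
  pose proof (Rabs_lt_sqrt_sq_add u). pose proof (Rle_abs (- u)).
  rewrite Rabs_Ropp in *. lra.
Qed.

(* Strict Cauchy-Schwarz for the non-parallel vectors [(u, sqrt D)] and [(v, sqrt D)]. *)
Lemma sqrt_sq_add_mul_gt (u v : R) :
  u <> v -> u * v + D < sqrt (u ^ 2 + D) * sqrt (v ^ 2 + D).
Proof.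
  intros huv.
  assert (hsq : (sqrt (u ^ 2 + D) * sqrt (v ^ 2 + D)) ^ 2
                = (u * v + D) ^ 2 + D * (u - v) ^ 2).
  { rewrite Rpow_mult_distr, !sqrt_sq_add_sq. ring. }
  assert (0 < D * (u - v) ^ 2) by (apply Rmult_lt_0_compat, pow2_gt_0; lra).
  assert (0 <= sqrt (u ^ 2 + D) * sqrt (v ^ 2 + D))
    by (apply Rmult_le_pos; apply sqrt_pos).
  nra.
Qed.

Lemma sqrt_sq_add_strictly_convex : strictly_convex (fun u => sqrt (u ^ 2 + D)).
Proof.
  intros u v t huv ht; cbv beta.
  pose proof (sqrt_sq_add_mul_gt u v huv) as hmul.
  pose proof (sqrt_sq_add_sq (t * u + (1 - t) * v)).
  pose proof (sqrt_sq_add_sq u). pose proof (sqrt_sq_add_sq v).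
  pose proof (sqrt_pos ((t * u + (1 - t) * v) ^ 2 + D)).
  pose proof (sqrt_sq_add_pos u). pose proof (sqrt_sq_add_pos v).
  set (w := t * u + (1 - t) * v) in *.
  set (Su := sqrt (u ^ 2 + D)) in *. set (Sv := sqrt (v ^ 2 + D)) in *.
  assert (hpos : 0 < t * Su + (1 - t) * Sv)
    by (apply Rplus_lt_0_compat; apply Rmult_lt_0_compat; lra).
  (* [(t Su + (1-t) Sv)^2 - (w^2 + D) = 2 t (1-t) (Su Sv - u v - D)] *)
  assert (hgap : w ^ 2 + D < (t * Su + (1 - t) * Sv) ^ 2).
  { assert (0 < t * (1 - t)) by nra.
    unfold w. nra. }
  apply Rnot_le_lt. intros hle.
  pose proof (pow_incr _ _ 2 (conj (Rlt_le _ _ hpos) hle)). lra.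
Qed.

Lemma sqrt_sq_add_sub_eq (u : R) :
  sqrt (u ^ 2 + D) - u = D / (sqrt (u ^ 2 + D) + u).
Proof.
  pose proof (sqrt_sq_add_add_gt0 u). pose proof (sqrt_sq_add_sq u).
  field_simplify_eq; [nra | lra].
Qed.

Lemma is_lim_sqrt_sq_add_sub : is_lim (fun u => sqrt (u ^ 2 + D) - u) p_infty 0.
Proof.
  apply (is_lim_ext (fun u => D * / (sqrt (u ^ 2 + D) + u))).
  { intros u. rewrite sqrt_sq_add_sub_eq. reflexivity. }
  replace (Finite 0) with (Rbar_mult D (Rbar_inv p_infty)) by (simpl; f_equal; ring).
  apply is_lim_scal_l, is_lim_inv; [| discriminate].
  apply (is_lim_le_p_loc (fun u => u)); [| apply is_lim_id].
  exists 0. intros u _. pose proof (sqrt_pos (u ^ 2 + D)). lra.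
Qed.

Lemma is_lim_sqrt_sq_add_add : is_lim (fun u => sqrt (u ^ 2 + D) + u) m_infty 0.
Proof.
  apply (is_lim_ext (fun u => sqrt ((- u) ^ 2 + D) - (- u))).
  { intros u. replace ((- u) ^ 2) with (u ^ 2) by ring. ring. }
  apply (is_lim_comp _ _ _ _ p_infty is_lim_sqrt_sq_add_sub).
  - apply (is_lim_opp (fun u => u) m_infty m_infty), is_lim_id.
  - exists 0. easy.
Qed.

End SqrtSqAdd.

Section Eigenvalues.

Variables (n : nat) (a b : R).

Definition lam_arg (c : R) : R := 2 * a + (INR n + 1) * c.

Definition lam_root (c : R) : R := sqrt (lam_arg c ^ 2 + 4 * INR n * b ^ 2).

Lemma lam_plus_sub_sep (c : R) :
  lam_plus n a b c - lam_sep a c = / 2 * (lam_root c - lam_arg c).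
Proof. unfold lam_plus, lam_sep, lam_root, lam_arg. field. Qed.

Lemma lam_minus_sub_sep (c : R) :
  lam_minus n a b c - lam_sep a c = - / 2 * (lam_root c + lam_arg c).
Proof. unfold lam_minus, lam_sep, lam_root, lam_arg. field. Qed.

Lemma lam_plus_add_mul (c : R) :
  lam_plus n a b c - - INR n * c = / 2 * (lam_root c + lam_arg c).
Proof. unfold lam_plus, lam_root, lam_arg. field. Qed.

Lemma lam_minus_add_mul (c : R) :
  lam_minus n a b c - - INR n * c = - / 2 * (lam_root c - lam_arg c).
Proof. unfold lam_minus, lam_root, lam_arg. field. Qed.

Hypothesis hn : (0 < n)%nat.
Hypothesis hb : b <> 0.

Lemma lam_disc_pos : 0 < 4 * INR n * b ^ 2.
Proof.
  assert (0 < INR n) by (apply lt_0_INR; exact hn).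
  pose proof (pow2_gt_0 b hb). nra.
Qed.

Lemma lam_arg_slope_pos : 0 < INR n + 1.
Proof. pose proof (pos_INR n). lra. Qed.

Lemma lam_root_strictly_convex : strictly_convex lam_root.
Proof.
  apply (strictly_convex_comp_affine (fun u => sqrt (u ^ 2 + 4 * INR n * b ^ 2))).
  - pose proof lam_arg_slope_pos. lra.
  - exact (sqrt_sq_add_strictly_convex _ lam_disc_pos).
Qed.

Lemma lam_plus_strictly_convex : strictly_convex (fun c => lam_plus n a b c).
Proof.
  intros x y t hxy ht.
  pose proof (lam_root_strictly_convex x y t hxy ht).
  unfold lam_plus, lam_root, lam_arg in *. lra.
Qed.

Lemma lam_minus_strictly_concave : strictly_concave (fun c => lam_minus n a b c).
Proof.
  intros x y t hxy ht.
  pose proof (lam_root_strictly_convex x y t hxy ht).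
  unfold lam_minus, lam_root, lam_arg in *. lra.
Qed.

Lemma lam_minus_lt_sep_lt_plus (c : R) :
  lam_minus n a b c < lam_sep a c /\ lam_sep a c < lam_plus n a b c.
Proof.
  pose proof (lam_plus_sub_sep c). pose proof (lam_minus_sub_sep c).
  pose proof (sqrt_sq_add_sub_gt0 _ lam_disc_pos (lam_arg c)).
  pose proof (sqrt_sq_add_add_gt0 _ lam_disc_pos (lam_arg c)).
  unfold lam_root in *. lra.
Qed.

Lemma is_lim_lam_root_sub_arg : is_lim (fun c => lam_root c - lam_arg c) p_infty 0.
Proof.
  apply (is_lim_comp_affine (fun u => sqrt (u ^ 2 + 4 * INR n * b ^ 2) - u));
    [exact lam_arg_slope_pos | now left | exact (is_lim_sqrt_sq_add_sub _ lam_disc_pos)].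
Qed.

Lemma is_lim_lam_root_add_arg : is_lim (fun c => lam_root c + lam_arg c) m_infty 0.
Proof.
  apply (is_lim_comp_affine (fun u => sqrt (u ^ 2 + 4 * INR n * b ^ 2) + u));
    [exact lam_arg_slope_pos | now right | exact (is_lim_sqrt_sq_add_add _ lam_disc_pos)].
Qed.

Lemma lam_plus_asymptote_sep :
  asymptote_at (fun c => lam_plus n a b c) (fun c => lam_sep a c) p_infty.
Proof.
  apply (is_lim_ext (fun c => / 2 * (lam_root c - lam_arg c))).
  - intros c. symmetry. apply lam_plus_sub_sep.
  - exact (is_lim_scal_0 _ _ _ is_lim_lam_root_sub_arg).
Qed.

Lemma lam_minus_asymptote_sep :
  asymptote_at (fun c => lam_minus n a b c) (fun c => lam_sep a c) m_infty.
Proof.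
  apply (is_lim_ext (fun c => - / 2 * (lam_root c + lam_arg c))).
  - intros c. symmetry. apply lam_minus_sub_sep.
  - exact (is_lim_scal_0 _ _ _ is_lim_lam_root_add_arg).
Qed.

Lemma lam_plus_asymptote_mul :
  asymptote_at (fun c => lam_plus n a b c) (fun c => - INR n * c) m_infty.
Proof.
  apply (is_lim_ext (fun c => / 2 * (lam_root c + lam_arg c))).
  - intros c. symmetry. apply lam_plus_add_mul.
  - exact (is_lim_scal_0 _ _ _ is_lim_lam_root_add_arg).
Qed.

Lemma lam_minus_asymptote_mul :
  asymptote_at (fun c => lam_minus n a b c) (fun c => - INR n * c) p_infty.
Proof.
  apply (is_lim_ext (fun c => - / 2 * (lam_root c - lam_arg c))).
  - intros c. symmetry. apply lam_minus_add_mul.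
  - exact (is_lim_scal_0 _ _ _ is_lim_lam_root_sub_arg).
Qed.

End Eigenvalues.

Theorem lemma1 (n : nat) (a b : R) (hn : (2 < n)%nat) (hb : b <> 0) :
  (* (a) *)
  (strictly_convex (fun c => lam_plus n a b c) /\
   strictly_concave (fun c => lam_minus n a b c)) /\
  (* (b) *)
  ((forall c, lam_minus n a b c < lam_sep a c /\ lam_sep a c < lam_plus n a b c) /\
   asymptote_at (fun c => lam_plus n a b c) (fun c => lam_sep a c) p_infty /\
   asymptote_at (fun c => lam_minus n a b c) (fun c => lam_sep a c) m_infty) /\
  (* (c) *)
  (asymptote_at (fun c => lam_plus n a b c) (fun c => - INR n * c) m_infty /\
   asymptote_at (fun c => lam_minus n a b c) (fun c => - INR n * c) p_infty).
Proof.
  assert (hn0 : (0 < n)%nat) by lia.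
  split; [split | split; [split; [| split] | split]].
  - exact (lam_plus_strictly_convex n a b hn0 hb).
  - exact (lam_minus_strictly_concave n a b hn0 hb).
  - exact (lam_minus_lt_sep_lt_plus n a b hn0 hb).
  - exact (lam_plus_asymptote_sep n a b hn0 hb).
  - exact (lam_minus_asymptote_sep n a b hn0 hb).
  - exact (lam_plus_asymptote_mul n a b hn0 hb).
  - exact (lam_minus_asymptote_mul n a b hn0 hb).
Qed.
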